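(* Let $A$ be a finite abelian $p$-group, $f\colon\mathbb{Z}_p^h\to A$ a continuous homomorphism, and $q\colon A\to A/\operatorname{im}(f)$ the quotient map. Then (1) $\mathcal{F}_f=q^*\mathcal{F}_{A/\operatorname{im}(f)}$; and (2) if $\operatorname{im}(f)\subseteq pA$, then $\mathcal{F}_f=\mathcal{F}_A$.
   Context: For a finite abelian group $B$, $\mathcal{F}_B$ denotes the family of all proper subgroups of $B$. $\mathcal{F}_f$ is the minimal family of subgroups of $A$ (closed under taking subgroups) containing every proper subgroup $H\subsetneq A$ through which $f$ factors. For a homomorphism $q\colon A\to A'$ and a family $\mathcal{F}$ of subgroups of $A'$, $q^*\mathcal{F}$ is the minimal family of proper subgroups of $A$ containing $\{q^{-1}(H)\mid H\in\mathcal{F}\}$. *)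

From mathcomp Require Import all_boot all_fingroup all_solvable.
From mathcomp Require Import boolp.
Set Implicit Arguments. Unset Strict Implicit. Unset Printing Implicit Defensive.

Local Open Scope group_scope.

(* x = (x_n)_n with x_n = x_{n+1} mod p^n  (so x_n is the residue in Z/p^n). *)
Definition padic_prop (p : nat) (x : nat -> nat) := forall n, x n = x n.+1 %% p ^ n.

Record padic (p : nat) := Padic { pval :> nat -> nat; pvalP : padic_prop p pval }.

Lemma padd_proof (p : nat) (x y : padic p) :
  padic_prop p (fun n => (x n + y n) %% p ^ n).
Proof.
rewrite /padic_prop => n /=.
have d : p ^ n %| p ^ n.+1 by rewrite expnS dvdn_mull.
rewrite (modn_dvdm _ d) (pvalP x n) (pvalP y n).
by rewrite modnDm.
Qed.

Definition padd (p : nat) (x y : padic p) : padic p := Padic (padd_proof x y).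

Definition Zph (p h : nat) := 'I_h -> padic p.
Definition Zph_add (p h : nat) (x y : Zph p h) : Zph p h := fun i => padd (x i) (y i).

Definition is_Zph_hom (p h : nat) (gT : finGroupType) (f : Zph p h -> gT) :=
  forall x y, f (Zph_add x y) = f x * f y.

(* Continuity for the p-adic product topology on Z_p^h and the discrete topology on gT:
   every point x has a basic neighbourhood x + p^n Z_p^h on which f is constant. *)
Definition Zph_continuous (p h : nat) (gT : finGroupType) (f : Zph p h -> gT) :=
  forall x : Zph p h, exists n : nat,
    forall y : Zph p h, (forall i, y i n = x i n) -> f y = f x.

Definition imf (p h : nat) (gT : finGroupType) (f : Zph p h -> gT) : {set gT} :=
  [set g | `[< exists x, f x = g >] ].

Definition fam_proper (gT : finGroupType) (B : {set gT}) (K : {group gT}) : Prop :=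
  K \proper B.

(* F_f : minimal subgroup-closed family containing the proper H < A through which f factors *)
Definition fam_f (p h : nat) (gT : finGroupType) (A : {group gT}) (f : Zph p h -> gT)
  (K : {group gT}) : Prop :=
  exists H : {group gT}, [/\ H \proper A, (forall x, f x \in H) & K \subset H].

(* q^* F for q : A -> A / N the quotient map and F a family of subgroups of A / N:
   minimal subgroup-closed family of proper subgroups of A containing q^{-1}(H), H in F. *)
Definition fam_pullback (gT : finGroupType) (A N : {set gT})
  (F : {group coset_of N} -> Prop) (K : {group gT}) : Prop :=
  exists H : {group coset_of N},
    [/\ F H, A :&: coset N @*^-1 H \proper A & K \subset A :&: coset N @*^-1 H].

Definition pmul_set (gT : finGroupType) (p : nat) (A : {set gT}) : {set gT} :=
  [set a ^+ p | a in A].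

(** The image [I] of [f] is a subgroup of [A], and [f] factors through a
    subgroup [H] exactly when [I \subset H].  Since [A] is abelian, [I] is
    normal and the correspondence theorem identifies the proper subgroups of
    [A] containing [I] with the preimages of the proper subgroups of [A / I],
    which is (1).  For (2), the [p]-th powers of a [p]-group lie in its
    Frattini subgroup, which is contained in every maximal subgroup; hence
    every proper subgroup of [A] lies in a maximal one, which contains [I]. *)
From mathcomp Require Import all_boot all_fingroup all_solvable.
From mathcomp Require Import boolp.

Set Implicit Arguments.
Unset Strict Implicit.
Unset Printing Implicit Defensive.

Local Open Scope group_scope.

Definition fam_over (gT : finGroupType) (A I : {set gT}) (K : {group gT}) : Prop :=
  exists H : {group gT}, [/\ H \proper A, I \subset H & K \subset H].

Section ImageOfHom.

Variables (p h : nat) (gT : finGroupType) (f : Zph p h -> gT).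

Lemma imfP g : reflect (exists x, f x = g) (g \in imf f).
Proof. by rewrite inE; apply: asboolP. Qed.

Lemma mem_imf x : f x \in imf f.
Proof. by apply/imfP; exists x. Qed.

Lemma imf_subP (B : {set gT}) : reflect (forall x, f x \in B) (imf f \subset B).
Proof.
apply: (iffP subsetP) => [sfB x | fB _ /imfP[x <-] //].
exact/sfB/mem_imf.
Qed.

Lemma fam_f_imf (A : {group gT}) (K : {group gT}) :
  fam_f A f K <-> fam_over A (imf f) K.
Proof.
by split=> -[H [pHA fH sKH]]; exists H; split=> //; apply/imf_subP.
Qed.

Hypothesis f_hom : is_Zph_hom f.

(* Being finite and closed under products, [imf f] contains
   [1 = f z ^+ #[f z]]. *)
Lemma imf_group_set : group_set (imf f).
Proof.
have zP : padic_prop p (fun _ => 0) by move=> n; rewrite mod0n.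
pose z : Zph p h := fun _ => Padic zP.
have imfX n : f z ^+ n.+1 \in imf f.
  elim: n => [|n /imfP[y fy]]; first by rewrite expg1 mem_imf.
  by rewrite expgS -fy -f_hom mem_imf.
apply/andP; split.
  by rewrite -(expg_order (f z)) -(prednK (order_gt0 (f z))) imfX.
apply/subsetP => _ /imset2P[_ _ /imfP[x <-] /imfP[y <-] ->].
by rewrite -f_hom mem_imf.
Qed.

Definition imf_group := Group imf_group_set.

End ImageOfHom.

Section ProperOverFamilies.

Variables (gT : finGroupType) (A : {group gT}).

Lemma fam_over_pullback (I K : {group gT}) :
  I \subset A -> A \subset 'N(I) ->
  fam_over A I K <-> fam_pullback A (fam_proper (A / I)) K.
Proof.
move=> sIA nIA; split=> [[H [pHA sIH sKH]] | [Hq [_ pHA sKH]]].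
  have sHA := proper_sub pHA.
  have nsIH : I <| H by rewrite /normal sIH (subset_trans sHA nIA).
  have defH : A :&: coset I @*^-1 (H / I) = H.
    by rewrite quotientGK //; apply/setIidPr.
  exists (H / I)%G; rewrite defH; split=> //.
  rewrite /fam_proper properE quotientS //= quotientSGK //.
  by case/andP: (pHA).
exists (A :&: coset I @*^-1 Hq)%G; split=> //.
by rewrite subsetI sIA -{1}(ker_coset I) ker_sub_pre.
Qed.

Lemma fam_over_Phi (I K : {group gT}) :
  I \subset 'Phi(A) -> fam_over A I K <-> fam_proper A K.
Proof.
move=> sIPhi; split=> [[H [pHA _ sKH]] | pKA]; first exact: sub_proper_trans pHA.
have [M maxM sKM] := maxgroup_exists (pKA : (fun M : {group gT} => M \proper A) K).
exists M; split=> //; first by case/maxgroupP: maxM.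
exact: subset_trans sIPhi (Phi_sub_max maxM).
Qed.

End ProperOverFamilies.

Lemma pmul_set_sub_Phi (p : nat) (gT : finGroupType) (A : {group gT}) :
  p.-group A -> pmul_set p A \subset 'Phi(A).
Proof.
move=> pA; rewrite (Phi_joing pA) (MhoE 1 pA) expn1.
exact: subset_trans (sub_gen _) (joing_subr _ _).
Qed.

Theorem lemma6p5 (p : nat) (gT : finGroupType) (A : {group gT}) (h : nat)
  (f : Zph p h -> gT) :
  prime p -> abelian A -> p.-group A ->
  (forall x, f x \in A) -> is_Zph_hom f -> Zph_continuous f ->
  (forall K : {group gT},
     fam_f A f K <-> fam_pullback A (fam_proper (A / imf f)) K)
  /\
  (imf f \subset pmul_set p A ->
     forall K : {group gT}, fam_f A f K <-> fam_proper A K).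
Proof.
move=> _ cA pA /imf_subP sIA f_hom _.
pose I := imf_group f_hom.
split=> [K | sIpA K]; apply: iff_trans (fam_f_imf f A K) _.
  exact: (@fam_over_pullback _ _ I _ sIA (sub_abelian_norm cA sIA)).
exact: (@fam_over_Phi _ _ I _ (subset_trans sIpA (pmul_set_sub_Phi pA))).
Qed.
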